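(* Let $G_1=(V_1,E_1,\ell_1)$ and $G_2=(V_2,E_2,\ell_2)$ be finite node-labeled directed graphs, let $\mathcal{L}:V_1\times V_2\to[0,1]$ satisfy $\mathcal{L}(u,v)=1$ if and only if $\ell_1(u)=\ell_2(v)$, and let $w^+,w^-$ satisfy $0<w^+$, $0<w^-$, $w^++w^-<1$. Define $F^0=\mathcal{L}$ and, for $k\ge1$, $$F^k(u,v)=w^+A^k(N^+_{G_1}(u),N^+_{G_2}(v))+w^-A^k(N^-_{G_1}(u),N^-_{G_2}(v))+(1-w^+-w^-)\mathcal{L}(u,v),$$ where for $S_1\subseteq V_1$, $S_2\subseteq V_2$: $A^k(S_1,S_2)=1$ if $S_1=S_2=\emptyset$; $A^k(S_1,S_2)=0$ if exactly one of $S_1,S_2$ is empty; and otherwise $$A^k(S_1,S_2)=\frac{1}{\sqrt{|S_1|\,|S_2|}}\max_{g}\sum_{(x,y)\in g}F^{k-1}(x,y),$$ the maximum ranging over all sets $g\subseteq S_1\times S_2$ that are the graph of an injective map from the smaller of $S_1,S_2$ into the larger (if $|S_1|\le|S_2|$, injective maps $S_1\to S_2$; otherwise injective maps $S_2\to S_1$, written as pairs $(x,y)$ with $x\in S_1$, $y\in S_2$). Let $\mathrm{FSim}_{bj}(u,v)=\lim_{k\to\infty}F^k(u,v)$ (the limit exists). Then: (P1) $0\le\mathrm{FSim}_{bj}(u,v)\le1$; (P2) $\mathrm{FSim}_{bj}(u,v)=1$ if and only if $u$ is bijectively simulated by $v$, i.e. there exists a bijective simulation $R\subseteq V_1\times V_2$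 with $(u,v)\in R$; (P3) if moreover $\mathcal{L}(u,v)=\mathcal{L}'(v,u)$ for all $u,v$, where $\mathcal{L}'$ is the label function used when computing the same scheme from $G_2$ to $G_1$, then $\mathrm{FSim}_{bj}(u,v)$ computed from $G_1$ to $G_2$ equals $\mathrm{FSim}_{bj}(v,u)$ computed from $G_2$ to $G_1$ (in particular, when $G_1=G_2$ and $\mathcal{L}$ is symmetric, $\mathrm{FSim}_{bj}(u,v)=\mathrm{FSim}_{bj}(v,u)$).
   Context: $N^+_G(u)=\{u':(u,u')\in E(G)\}$ and $N^-_G(u)=\{u':(u',u)\in E(G)\}$. A relation $R\subseteq V_1\times V_2$ is a bijective simulation if for every $(u,v)\in R$: $\ell_1(u)=\ell_2(v)$; there is a bijection $\lambda_1:N^+_{G_1}(u)\to N^+_{G_2}(v)$ with $(u',\lambda_1(u'))\in R$ for all $u'\in N^+_{G_1}(u)$; and there is a bijection $\lambda_2:N^-_{G_1}(u)\to N^-_{G_2}(v)$ with $(u'',\lambda_2(u''))\in R$ for all $u''\in N^-_{G_1}(u)$. *)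

From HB Require Import structures.
From mathcomp Require Import all_boot all_order all_algebra.
From mathcomp Require Import all_classical all_reals all_analysis.
Set Implicit Arguments. Unset Strict Implicit. Unset Printing Implicit Defensive.
Import Order.TTheory GRing.Theory Num.Theory.
Local Open Scope ring_scope.

Definition Nout (V : finType) (E : rel V) (u : V) : {set V} := [set u' | E u u'].
Definition Nin (V : finType) (E : rel V) (u : V) : {set V} := [set u' | E u' u].

(* g \subset S1 x S2 is the graph of an injective map from the smaller of S1,S2
   into the larger (ties: injective maps S1 -> S2), written as pairs (x,y)
   with x in S1, y in S2. *)
Definition inj_match (V1 V2 : finType) (S1 : {set V1}) (S2 : {set V2})
  (g : {set V1 * V2}) : bool :=
  [forall p in g, (p.1 \in S1) && (p.2 \in S2)] &&
  (if #|S1| <= #|S2| then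
     [forall x in S1, #|[set y | (x, y) \in g]| == 1] &&
     [forall y in S2, #|[set x | (x, y) \in g]| <= 1]
   else
     [forall y in S2, #|[set x | (x, y) \in g]| == 1] &&
     [forall x in S1, #|[set y | (x, y) \in g]| <= 1])%N.

Definition Asim (R : realType) (V1 V2 : finType) (F : V1 -> V2 -> R)
  (S1 : {set V1}) (S2 : {set V2}) : R :=
  if (S1 == finset.set0) && (S2 == finset.set0) then 1
  else if (S1 == finset.set0) || (S2 == finset.set0) then 0
  else (Num.sqrt (#|S1|%:R * #|S2|%:R))^-1 *
       \big[Num.max/0]_(g : {set V1 * V2} | inj_match S1 S2 g)
          \sum_(p in g) F p.1 p.2.

Fixpoint Fbj (R : realType) (V1 V2 : finType) (E1 : rel V1) (E2 : rel V2)
  (Lf : V1 -> V2 -> R) (wp wm : R) (k : nat) : V1 -> V2 -> R :=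
  match k with
  | 0 => Lf
  | k'.+1 => fun u v =>
      wp * Asim (Fbj E1 E2 Lf wp wm k') (Nout E1 u) (Nout E2 v)
    + wm * Asim (Fbj E1 E2 Lf wp wm k') (Nin E1 u) (Nin E2 v)
    + (1 - wp - wm) * Lf u v
  end.

Definition bij_in_rel (V1 V2 : finType) (Rel : V1 -> V2 -> Prop)
  (S1 : {set V1}) (S2 : {set V2}) : Prop :=
  exists f : V1 -> V2,
    {in S1 &, injective f} /\ f @: S1 = S2 /\ (forall x, x \in S1 -> Rel x (f x)).

Definition bij_simulation (V1 V2 : finType) (Lab : Type)
  (E1 : rel V1) (E2 : rel V2) (l1 : V1 -> Lab) (l2 : V2 -> Lab)
  (Rel : V1 -> V2 -> Prop) : Prop :=
  forall u v, Rel u v ->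
    l1 u = l2 v /\
    bij_in_rel Rel (Nout E1 u) (Nout E2 v) /\
    bij_in_rel Rel (Nin E1 u) (Nin E2 v).

(* Write step F for the right-hand side of the recursion, so that
   F^(k+1) = step F^k.  The proof rests on four facts about the matching
   score Asim F S1 S2 (a normalised maximum-weight matching between S1 and S2):
   - it lies in [0,1] when F does, because a matching has min(|S1|,|S2|)
     <= sqrt(|S1| |S2|) pairs;
   - it is 1-Lipschitz in F for the sup distance, so step is a contraction of
     ratio wp + wm < 1; hence F^k converges geometrically and its limit FSim
     is a fixpoint of step;
   - it equals 1 exactly when some bijection S1 -> S2 only pairs nodes at
     which F is 1 (a weight-sqrt(|S1||S2|) matching must be perfect);
   - it is invariant under exchanging the two sides, since the matchings of
     (S1,S2) and (S2,S1) correspond by swapping pairs.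
   P1 follows from the first two facts; P2 holds because a fixpoint of step
   equals 1 exactly on a bijective simulation (third fact and the fact that
   weighted means of values <= 1 equal 1 only if all of them do), and
   P3 because each F^k is swap-invariant (fourth fact). *)

From HB Require Import structures.
From mathcomp Require Import all_boot all_order all_algebra.
From mathcomp Require Import all_classical all_reals all_analysis.
From mathcomp Require Import zify ring lra.
Import Order.TTheory GRing.Theory Num.Theory numFieldNormedType.Exports.

Set Implicit Arguments. Unset Strict Implicit. Unset Printing Implicit Defensive.

Lemma all_eq1_sum (T : finType) (S : {set T}) (c : T -> nat) :
  [forall x in S, c x == 1] =
  [forall x in S, c x <= 1] && (\sum_(x in S) c x == #|S|).
Proof.
apply/forallP/andP => [Hc | [/forallP Hle /eqP Hs] x].
  have c1 x : x \in S -> c x = 1 by move=> Sx; have := Hc x; rewrite Sx => /eqP.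
  split; first by apply/forallP => x; apply/implyP => /c1 ->.
  by rewrite -sum1_card; apply/eqP/eq_bigr.
apply/implyP => Sx; apply/eqP.
have le1 y : y \in S -> c y <= 1 by move=> Sy; have := Hle y; rewrite Sy.
have : \sum_(y in S) (1 - c y) + \sum_(y in S) c y = #|S|.
  by rewrite -big_split /= -sum1_card; apply: eq_bigr => y Sy; rewrite subnK ?le1.
rewrite Hs => /eqP; rewrite -[X in _ == X]add0n eqn_add2r sum_nat_eq0.
by move=> /forallP /(_ x); rewrite Sx /=; have := le1 x Sx; lia.
Qed.

Definition pairs_in (V1 V2 : finType) (S1 : {set V1}) (S2 : {set V2})
  (g : {set V1 * V2}) : bool :=
  [forall p in g, (p.1 \in S1) && (p.2 \in S2)].

Definition partial_match (V1 V2 : finType) (S1 : {set V1}) (S2 : {set V2})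
  (g : {set V1 * V2}) : bool :=
  [&& pairs_in S1 S2 g,
      [forall x in S1, #|[set y | (x, y) \in g]| <= 1] &
      [forall y in S2, #|[set x | (x, y) \in g]| <= 1]].

Lemma card_pairs_rows (V1 V2 : finType) (S1 : {set V1}) (S2 : {set V2})
  (g : {set V1 * V2}) : pairs_in S1 S2 g ->
  #|g| = \sum_(x in S1) #|[set y | (x, y) \in g]|.
Proof.
move=> /forallP Hg.
rewrite -sum1_card big_mkcond /=.
rewrite (eq_bigr (fun p => (fun x y => if (x, y) \in g then 1 else 0)%N p.1 p.2));
  last by case.
rewrite -(pair_bigA _ (fun x y => if (x, y) \in g then 1 else 0)%N) /=.
rewrite [RHS]big_mkcond /=; apply: eq_bigr => x _.
case: ifP => Sx.
  by rewrite -sum1_card [RHS]big_mkcond /=; apply: eq_bigr => y _; rewrite inE.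
apply: big1 => y _; case: ifP => // gxy.
by have := Hg (x, y); rewrite gxy Sx.
Qed.

Definition swap_pairs (A B : finType) (g : {set A * B}) : {set B * A} :=
  [set (p.2, p.1) | p in g].

Lemma mem_swap_pairs (A B : finType) (g : {set A * B}) x y :
  ((y, x) \in swap_pairs g) = ((x, y) \in g).
Proof. by apply/imsetP/idP => [[[a b] gab [-> ->]] // | gxy]; exists (x, y). Qed.

Lemma swap_pairsK (A B : finType) : cancel (@swap_pairs A B) (@swap_pairs B A).
Proof. by move=> g; apply/setP => -[x y]; rewrite !mem_swap_pairs. Qed.

Lemma card_swap_pairs (A B : finType) (g : {set A * B}) :
  #|swap_pairs g| = #|g|.
Proof. by rewrite card_imset // => -[a b] [c d] [-> ->]. Qed.

Lemma rows_swap_pairs (A B : finType) (g : {set A * B}) (x : B) :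
  [set y | (x, y) \in swap_pairs g] = [set y | (y, x) \in g].
Proof. by apply/setP => y; rewrite !inE mem_swap_pairs. Qed.

Lemma cols_swap_pairs (A B : finType) (g : {set A * B}) (y : A) :
  [set x | (x, y) \in swap_pairs g] = [set x | (y, x) \in g].
Proof. by apply/setP => x; rewrite !inE mem_swap_pairs. Qed.

Lemma pairs_in_swap (V1 V2 : finType) (S1 : {set V1}) (S2 : {set V2})
  (g : {set V1 * V2}) : pairs_in S2 S1 (swap_pairs g) = pairs_in S1 S2 g.
Proof.
apply/forallP/forallP => H [a b] /=; apply/implyP => gab.
  by have := H (b, a); rewrite /= mem_swap_pairs gab /= andbC.
case/imsetP: gab => -[c d] gcd [-> ->].
by have := H (c, d); rewrite gcd /= andbC.
Qed.

Lemma card_pairs_cols (V1 V2 : finType) (S1 : {set V1}) (S2 : {set V2})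
  (g : {set V1 * V2}) : pairs_in S1 S2 g ->
  #|g| = \sum_(y in S2) #|[set x | (x, y) \in g]|.
Proof.
rewrite -pairs_in_swap -card_swap_pairs => /card_pairs_rows ->.
by apply: eq_bigr => y _; rewrite rows_swap_pairs.
Qed.

(* A side-independent description of inj_match: a partial matching with
   min(|S1|,|S2|) pairs. *)
Lemma inj_matchE (V1 V2 : finType) (S1 : {set V1}) (S2 : {set V2})
  (g : {set V1 * V2}) :
  inj_match S1 S2 g = partial_match S1 S2 g && (#|g| == minn #|S1| #|S2|).
Proof.
rewrite /inj_match /partial_match /pairs_in.
case Hsub: [forall p in g, _] => //=.
rewrite !all_eq1_sum -(card_pairs_rows Hsub) -(card_pairs_cols Hsub).
case: leqP => _; first by rewrite andbAC.
by rewrite andbAC [[forall y in S2, _] && _]andbC.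
Qed.

Lemma inj_match_card (V1 V2 : finType) (S1 : {set V1}) (S2 : {set V2})
  (g : {set V1 * V2}) : inj_match S1 S2 g -> #|g| = minn #|S1| #|S2|.
Proof. by rewrite inj_matchE => /andP[_ /eqP]. Qed.

Lemma graph_inj_match (V1 V2 : finType) (S1 : {set V1}) (S2 : {set V2})
  (f : V1 -> V2) : {in S1 &, injective f} -> f @: S1 = S2 ->
  inj_match S1 S2 [set (x, f x) | x in S1].
Proof.
move=> f_inj f_img.
have S12 : #|S1| = #|S2| by rewrite -f_img card_in_imset.
have mem x y : ((x, y) \in [set (x, f x) | x in S1]) = (x \in S1) && (y == f x).
  by apply/imsetP/andP => [[x' Sx' [-> ->]] | [Sx /eqP ->]]; [|exists x].
rewrite /inj_match S12 leqnn; apply/and3P; split.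
- apply/forallP => -[x y]; apply/implyP; rewrite mem => /andP[Sx /eqP ->] /=.
  by rewrite Sx -f_img imset_f.
- apply/forallP => x; apply/implyP => Sx; apply/cards1P; exists (f x).
  by apply/setP => y; rewrite [in LHS]finset.in_set mem finset.in_set1 Sx.
- apply/forallP => y; apply/implyP => _; apply/card_le1_eqP => x1 x2.
  rewrite !finset.in_set !mem => /andP[Sx1 /eqP E1] /andP[Sx2 /eqP E2].
  by apply: f_inj => //; rewrite -E1 -E2.
Qed.

(* Conversely a matching between equinumerous sets is the graph of a
   bijection (y0 is an arbitrary default value outside S1). *)
Lemma perfect_match_bij (V1 V2 : finType) (S1 : {set V1}) (S2 : {set V2})
  (g : {set V1 * V2}) (y0 : V2) :
  inj_match S1 S2 g -> #|S1| = #|S2| ->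
  exists f : V1 -> V2, [/\ {in S1 &, injective f}, f @: S1 = S2 &
                           forall x, x \in S1 -> (x, f x) \in g].
Proof.
rewrite /inj_match => + S12; rewrite S12 leqnn.
move=> /and3P[/forallP Hsub /forallP rows /forallP cols].
pose f x := if [pick y | (x, y) \in g] is Some y then y else y0.
have f_g x : x \in S1 -> (x, f x) \in g.
  move=> Sx; rewrite /f; case: pickP => [y //|none].
  have := rows x; rewrite Sx /=.
  suff -> : [set y | (x, y) \in g] = finset.set0 by rewrite cards0.
  by apply/setP => y; rewrite !inE none.
have f_S2 x : x \in S1 -> f x \in S2.
  by move=> Sx; have := Hsub (x, f x); rewrite f_g //= => /andP[].
have f_inj : {in S1 &, injective f}.
  move=> x1 x2 Sx1 Sx2 f12; have := cols (f x1); rewrite f_S2 //=.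
  by move=> /card_le1_eqP; apply; rewrite inE; [rewrite f12|]; apply: f_g.
exists f; split => //; apply/eqP; rewrite eqEcard card_in_imset // S12 leqnn andbT.
by apply/fintype.subsetP => y /imsetP[x Sx ->]; apply: f_S2.
Qed.

Lemma inj_match_swap (V1 V2 : finType) (S1 : {set V1}) (S2 : {set V2})
  (g : {set V1 * V2}) : inj_match S2 S1 (swap_pairs g) = inj_match S1 S2 g.
Proof.
rewrite !inj_matchE card_swap_pairs minnC /partial_match pairs_in_swap.
have -> : [forall x in S2, #|[set y | (x, y) \in swap_pairs g]| <= 1] =
          [forall y in S2, #|[set x | (x, y) \in g]| <= 1].
  by apply: eq_forallb => y; rewrite rows_swap_pairs.
have -> : [forall y in S1, #|[set x | (x, y) \in swap_pairs g]| <= 1] =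
          [forall x in S1, #|[set y | (x, y) \in g]| <= 1].
  by apply: eq_forallb => x; rewrite cols_swap_pairs.
by rewrite (andbC [forall y in S2, _]).
Qed.

Lemma minn_sq_eq (a b : nat) : 0 < a -> 0 < b ->
  minn a b * minn a b = a * b -> a = b.
Proof. by move=> a0 b0; rewrite /minn; case: ltnP => _ /=; nia. Qed.

Local Open Scope ring_scope.

Lemma minn_le_sqrt (R : rcfType) (a b : nat) :
  (minn a b)%:R <= Num.sqrt (a%:R * b%:R : R).
Proof.
rewrite -[leLHS](@ger0_norm R) // -sqrtr_sqr.
apply: ler_wsqrtr; rewrite -natrX -natrM ler_nat expnS expn1.
by apply: leq_mul; [exact: geq_minl | exact: geq_minr].
Qed.

Lemma bigmax_shift (R : realDomainType) (T : finType) (P : pred T)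
  (f1 f2 : T -> R) c :
  0 <= c -> (forall g, P g -> f1 g <= f2 g + c) ->
  \big[Num.max/0]_(g | P g) f1 g <= \big[Num.max/0]_(g | P g) f2 g + c.
Proof.
move=> c0 H; apply: bigmax_le; first by rewrite addr_ge0 // bigmax_ge_id.
move=> g Pg; apply: le_trans (H g Pg) _; rewrite lerD2r.
exact: le_bigmax_cond.
Qed.

Lemma sum_le1_eq_card (R : numDomainType) (T : finType) (A : {set T})
  (f : T -> R) :
  (forall x, x \in A -> f x <= 1) -> \sum_(x in A) f x = #|A|%:R ->
  forall x, x \in A -> f x = 1.
Proof.
move=> le1 Hs.
have : \sum_(x in A) (1 - f x) = 0 by rewrite sumrB sumr_const Hs subrr.
move/psumr_eq0P => H x Ax; apply/eqP; rewrite -subr_eq0 -oppr_eq0 opprB.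
by rewrite H // => y /le1; rewrite subr_ge0.
Qed.

Section MatchingScore.
Variables (R : realType) (V1 V2 : finType).

Definition best_weight (F : V1 -> V2 -> R) (S1 : {set V1}) (S2 : {set V2}) : R :=
  \big[Num.max/0]_(g | inj_match S1 S2 g) \sum_(p in g) F p.1 p.2.

Lemma AsimE (F : V1 -> V2 -> R) (S1 : {set V1}) (S2 : {set V2}) :
  S1 != finset.set0 -> S2 != finset.set0 ->
  Asim F S1 S2 = (Num.sqrt (#|S1|%:R * #|S2|%:R))^-1 * best_weight F S1 S2.
Proof. by move=> /negbTE S10 /negbTE S20; rewrite /Asim S10 S20. Qed.

Lemma sqrt_card_gt0 (S1 : {set V1}) (S2 : {set V2}) :
  S1 != finset.set0 -> S2 != finset.set0 ->
  0 < Num.sqrt (#|S1|%:R * #|S2|%:R : R).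
Proof. by move=> S10 S20; rewrite sqrtr_gt0 mulr_gt0 // ltr0n lt0n cards_eq0. Qed.

Lemma weight_le_card (F : V1 -> V2 -> R) (g : {set V1 * V2}) :
  (forall x y, F x y <= 1) -> \sum_(p in g) F p.1 p.2 <= #|g|%:R.
Proof. by move=> F1; rewrite -sum1_card natr_sum; apply: ler_sum => p _. Qed.

Lemma match_weight_le (F : V1 -> V2 -> R) (S1 : {set V1}) (S2 : {set V2})
  (g : {set V1 * V2}) : (forall x y, F x y <= 1) -> inj_match S1 S2 g ->
  \sum_(p in g) F p.1 p.2 <= Num.sqrt (#|S1|%:R * #|S2|%:R).
Proof.
move=> F1 /inj_match_card gE; apply: le_trans (weight_le_card g F1) _.
by rewrite gE minn_le_sqrt.
Qed.

Lemma best_weight_le (F : V1 -> V2 -> R) (S1 : {set V1}) (S2 : {set V2}) :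
  (forall x y, F x y <= 1) ->
  best_weight F S1 S2 <= Num.sqrt (#|S1|%:R * #|S2|%:R).
Proof. by move=> F1; apply: bigmax_le => // g; apply: match_weight_le. Qed.

Lemma Asim_bnd (F : V1 -> V2 -> R) (S1 : {set V1}) (S2 : {set V2}) :
  (forall x y, 0 <= F x y <= 1) -> 0 <= Asim F S1 S2 <= 1.
Proof.
move=> F01; rewrite /Asim; case: ifP => [_|]; first by rewrite ler01 lexx.
case: ifP => [_ _|]; first by rewrite lexx ler01.
move=> /norP[S10 S20] _; have s0 := sqrt_card_gt0 S10 S20.
have bw := best_weight_le S1 S2 (fun x y => proj2 (andP (F01 x y))).
rewrite -/(best_weight F S1 S2); apply/andP; split.
  by rewrite mulr_ge0 ?invr_ge0 ?bigmax_ge_id // ltW.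
by rewrite ler_pdivrMl // mulr1.
Qed.

Lemma Asim_lip (F G : V1 -> V2 -> R) (d : R) (S1 : {set V1}) (S2 : {set V2}) :
  0 <= d -> (forall x y, `|F x y - G x y| <= d) ->
  `|Asim F S1 S2 - Asim G S1 S2| <= d.
Proof.
move=> d0 FGd; rewrite /Asim; case: ifP => [_|]; first by rewrite subrr normr0.
case: ifP => [_ _|]; first by rewrite subrr normr0.
move=> /norP[S10 S20] _; have s0 := sqrt_card_gt0 S10 S20.
set s := Num.sqrt _ in s0 *.
have shift F' G' : (forall x y, `|F' x y - G' x y| <= d) ->
    best_weight F' S1 S2 <= best_weight G' S1 S2 + s * d.
  move=> FG'; apply: bigmax_shift; first by rewrite mulr_ge0 // ltW.
  move=> g gm.
  have -> : \sum_(p in g) F' p.1 p.2 =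
            \sum_(p in g) (G' p.1 p.2 + (F' p.1 p.2 - G' p.1 p.2)).
    by apply: eq_bigr => p _; rewrite addrC subrK.
  rewrite big_split lerD2l /=; apply: le_trans (_ : \sum_(p in g) d <= _).
    by apply: ler_sum => p _; apply: le_trans (ler_norm _) (FG' _ _).
  rewrite sumr_const -mulr_natl ler_wpM2r // (inj_match_card gm).
  exact: minn_le_sqrt.
have GFd x y : `|G x y - F x y| <= d by rewrite distrC.
have := shift F G FGd; have := shift G F GFd.
rewrite -!/(best_weight _ S1 S2) -mulrBr normrM ger0_norm ?invr_ge0 ?(ltW s0) //.
by rewrite ler_pdivrMl // ler_norml => ? ?; apply/andP; split; lra.
Qed.

Lemma Asim_swap (F : V1 -> V2 -> R) (G : V2 -> V1 -> R)
  (S1 : {set V1}) (S2 : {set V2}) :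
  (forall x y, F x y = G y x) -> Asim G S2 S1 = Asim F S1 S2.
Proof.
move=> FG; rewrite /Asim andbC orbC [_%:R * _%:R]mulrC.
case: ifP => // _; case: ifP => // _; congr (_ * _).
rewrite (reindex (@swap_pairs V1 V2)) /=; last first.
  by exists (@swap_pairs V2 V1) => g _; apply: swap_pairsK.
apply: eq_big => g; first by rewrite inj_match_swap.
move=> _; rewrite big_imset /=; last by move=> [a b] [c d] _ _ [-> ->].
by apply: eq_bigr => p _; rewrite FG.
Qed.

Lemma Asim_eq1 (F : V1 -> V2 -> R) (S1 : {set V1}) (S2 : {set V2}) (f : V1 -> V2) :
  (forall x y, F x y <= 1) -> {in S1 &, injective f} -> f @: S1 = S2 ->
  (forall x, x \in S1 -> F x (f x) = 1) ->
  Asim F S1 S2 = 1.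
Proof.
move=> F1 f_inj f_img f_one.
have S12 : #|S1| = #|S2| by rewrite -f_img card_in_imset.
case: (eqVneq S1 finset.set0) => [S10|S10].
  by rewrite /Asim -f_img S10 imset0 !eqxx.
have S20 : S2 != finset.set0 by rewrite -cards_eq0 -S12 cards_eq0.
rewrite AsimE //.
have s0 := sqrt_card_gt0 S10 S20; set s := Num.sqrt _ in s0 *.
have sE : s = #|S1|%:R by rewrite /s -S12 -expr2 sqrtr_sqr ger0_norm.
suff -> : best_weight F S1 S2 = s by rewrite mulVf ?gt_eqF.
apply/eqP; rewrite eq_le best_weight_le //=.
apply: (bigmax_sup [set (x, f x) | x in S1]); first exact: graph_inj_match.
rewrite big_imset /=; last by move=> a b _ _ [].
by rewrite (eq_bigr (fun=> 1)) ?sumr_const ?sE.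
Qed.

Lemma Asim_eq1_match (F : V1 -> V2 -> R) (S1 : {set V1}) (S2 : {set V2}) :
  (forall x y, F x y <= 1) ->
  S1 != finset.set0 -> S2 != finset.set0 -> Asim F S1 S2 = 1 ->
  exists g : {set V1 * V2},
    [/\ inj_match S1 S2 g, #|S1| = #|S2| & forall p, p \in g -> F p.1 p.2 = 1].
Proof.
move=> F1 S10 S20; rewrite AsimE //.
have s0 := sqrt_card_gt0 S10 S20; set s := Num.sqrt _ in s0 *.
move=> /(congr1 (fun t => s * t)); rewrite mulr1 mulrA mulfV ?gt_eqF // mul1r.
move=> best_s.
have [g /andP[gm s_le]] :
    exists g, inj_match S1 S2 g && (s <= \sum_(p in g) F p.1 p.2).
  apply/existsP; apply: contraTT (lexx s) => /existsPn none.
  rewrite -ltNge -[ltLHS]best_s; apply: bigmax_lt => // g gm.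
  by have := none g; rewrite gm /= ltNge.
have w_le := weight_le_card g F1.
have g_s : #|g|%:R = s.
  apply/eqP; rewrite eq_le (le_trans s_le w_le) (inj_match_card gm).
  by rewrite minn_le_sqrt.
exists g; split => //.
  apply: minn_sq_eq; rewrite ?lt0n ?cards_eq0 // -(inj_match_card gm).
  apply/eqP; rewrite -(eqr_nat R) !natrM g_s -expr2 sqr_sqrtr //.
apply: (sum_le1_eq_card (f := fun p => F p.1 p.2)) => [p _|]; first exact: F1.
by apply/eqP; rewrite eq_le w_le g_s s_le.
Qed.

Lemma Asim_eq1_bij (F : V1 -> V2 -> R) (S1 : {set V1}) (S2 : {set V2}) (y0 : V2) :
  (forall x y, F x y <= 1) ->
  Asim F S1 S2 = 1 -> bij_in_rel (fun x y => F x y = 1) S1 S2.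
Proof.
move=> F1 A1.
case: (eqVneq S1 finset.set0) => [S10|S10];
  case: (eqVneq S2 finset.set0) => [S20|S20].
- exists (fun=> y0); rewrite S10 S20 imset0.
  by split; [move=> x y; rewrite inE | split=> // x; rewrite inE].
- move: A1; rewrite /Asim S10 eqxx (negbTE S20) /= => /eqP.
  by rewrite eq_sym oner_eq0.
- move: A1; rewrite /Asim S20 eqxx (negbTE S10) /= => /eqP.
  by rewrite eq_sym oner_eq0.
have [g [gm S12 g1]] := Asim_eq1_match F1 S10 S20 A1.
have [f [f_inj f_img f_g]] := perfect_match_bij y0 gm S12.
exists f; split; [done | split=> // x Sx].
exact: (g1 (x, f x) (f_g x Sx)).
Qed.

End MatchingScore.

Lemma mean3_bnd (R : realDomainType) (w1 w2 a b c : R) :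
  0 <= w1 -> 0 <= w2 -> w1 + w2 <= 1 ->
  0 <= a <= 1 -> 0 <= b <= 1 -> 0 <= c <= 1 ->
  0 <= w1 * a + w2 * b + (1 - w1 - w2) * c <= 1.
Proof. by move=> ? ? ? /andP[? ?] /andP[? ?] /andP[? ?]; apply/andP; split; nra. Qed.

Lemma mean3_eq1 (R : realDomainType) (w1 w2 a b c : R) :
  0 < w1 -> 0 < w2 -> w1 + w2 < 1 -> a <= 1 -> b <= 1 -> c <= 1 ->
  w1 * a + w2 * b + (1 - w1 - w2) * c = 1 -> [/\ a = 1, b = 1 & c = 1].
Proof.
move=> w10 w20 w12 a1 b1 c1 E.
have w0 : 0 < 1 - w1 - w2 by lra.
have one (w x : R) : 0 < w -> w * (1 - x) = 0 -> x = 1.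
  by move=> w_gt0 /eqP; rewrite mulf_eq0 gt_eqF //= subr_eq0 => /eqP <-.
by split; [apply: (one w1) | apply: (one w2) | apply: (one (1 - w1 - w2))]; nra.
Qed.

(* A sequence whose successive differences are bounded by c^k with c < 1
   converges, and lies within (1 - c)^-1 c^k of its limit at rank k: it is
   squeezed between the monotone sequences f k -+ (1 - c)^-1 c^k. *)
Lemma geometric_cauchy_cvg (R : realType) (c : R) (f : nat -> R) :
  0 <= c -> c < 1 -> (forall k, `|f k.+1 - f k| <= c ^+ k) ->
  exists l, (f @ \oo --> l)%classic /\
            forall k, `|f k - l| <= (1 - c)^-1 * c ^+ k.
Proof.
move=> c0 c1 f_step.
pose e k := (1 - c)^-1 * c ^+ k.
have c1' : 1 - c != 0 by rewrite subr_eq0 gt_eqF.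
have e_step k : e k - e k.+1 = c ^+ k by rewrite /e exprS; field.
have e0 k : 0 <= e k by rewrite /e mulr_ge0 ?exprn_ge0 // invr_ge0 subr_ge0 ltW.
have df k : f k.+1 - f k <= c ^+ k /\ f k - f k.+1 <= c ^+ k.
  by have := f_step k; rewrite ler_norml => /andP[? ?]; split; lra.
pose up k := f k + e k; pose lo k := f k - e k.
have up_dec : nonincreasing_seq up.
  apply/nonincreasing_seqP => k; rewrite /up.
  by move: (e_step k) (df k) => ? [? ?]; lra.
have lo_inc : nondecreasing_seq lo.
  apply/nondecreasing_seqP => k; rewrite /lo.
  by move: (e_step k) (df k) => ? [? ?]; lra.
have lo_up k : lo k <= up k by have := e0 k; rewrite /lo /up; lra.
have up_cvg : cvgn up.
  apply: cvgP (nonincreasing_cvgn up_dec _); exists (lo 0) => _ [n _ <-].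
  exact: le_trans (lo_inc 0 n (leq0n n)) (lo_up n).
have e_cvg : (e @ \oo --> 0)%classic.
  by apply: (@cvg_geometric _ (1 - c)^-1 c); rewrite ger0_norm.
have f_cvg : (f @ \oo --> limn up)%classic.
  have -> : f = up - e by apply/funext => k; rewrite /up /= addrK.
  by rewrite -[limn up]subr0; apply: cvgB.
have lo_cvg : (lo @ \oo --> limn up)%classic.
  by rewrite -[limn up]subr0; apply: cvgB.
exists (limn up); split => // k.
have up_ge := nonincreasing_cvgn_ge up_dec up_cvg k.
have lo_le := nondecreasing_cvgn_le lo_inc (cvgP _ lo_cvg) k.
rewrite (cvg_lim _ lo_cvg) // in lo_le.
move: up_ge lo_le; set L := limn up; rewrite /up /lo /e => ? ?.
by rewrite ler_norml; apply/andP; split; lra.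
Qed.

Lemma geometric_bound_le0 (R : realType) (x C c : R) :
  0 <= c -> c < 1 -> (forall k, x <= C * c ^+ k) -> x <= 0.
Proof.
move=> c0 c1 x_le.
have gc : (geometric C c @ \oo --> 0)%classic.
  by apply: cvg_geometric; rewrite ger0_norm.
rewrite -(cvg_lim _ gc) //; apply: limr_ge; [exact: cvgP gc | exact: nearW].
Qed.

Section Iteration.
Variables (R : realType) (V1 V2 : finType) (E1 : rel V1) (E2 : rel V2).
Variables (Lf : V1 -> V2 -> R) (wp wm : R).
Hypotheses (wp_gt0 : 0 < wp) (wm_gt0 : 0 < wm) (w_lt1 : wp + wm < 1).
Hypothesis Lf01 : forall u v, 0 <= Lf u v <= 1.

Definition step (F : V1 -> V2 -> R) : V1 -> V2 -> R := fun u v =>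
  wp * Asim F (Nout E1 u) (Nout E2 v) + wm * Asim F (Nin E1 u) (Nin E2 v)
  + (1 - wp - wm) * Lf u v.

Local Notation F k := (Fbj E1 E2 Lf wp wm k).

Lemma Fbj_succ k : F k.+1 = step (F k).
Proof. by []. Qed.

Lemma step_bnd (G : V1 -> V2 -> R) : (forall x y, 0 <= G x y <= 1) ->
  forall u v, 0 <= step G u v <= 1.
Proof.
move=> G01 u v; apply: mean3_bnd; try exact: ltW.
- exact: Asim_bnd.
- exact: Asim_bnd.
- exact: Lf01.
Qed.

Lemma Fbj_bnd k u v : 0 <= F k u v <= 1.
Proof.
by elim: k u v => [|k IH] u v; [exact: Lf01 | rewrite Fbj_succ; apply: step_bnd].
Qed.

Lemma step_lip (G H : V1 -> V2 -> R) (d : R) :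
  0 <= d -> (forall x y, `|G x y - H x y| <= d) ->
  forall u v, `|step G u v - step H u v| <= (wp + wm) * d.
Proof.
move=> d0 GHd u v.
have -> : step G u v - step H u v =
    wp * (Asim G (Nout E1 u) (Nout E2 v) - Asim H (Nout E1 u) (Nout E2 v))
  + wm * (Asim G (Nin E1 u) (Nin E2 v) - Asim H (Nin E1 u) (Nin E2 v)).
  by rewrite /step; ring.
rewrite mulrDl; apply: le_trans (ler_normD _ _) _.
rewrite !normrM (gtr0_norm wp_gt0) (gtr0_norm wm_gt0).
by apply: lerD; apply: ler_wpM2l; (exact: ltW || exact: Asim_lip).
Qed.

Lemma Fbj_dist_succ k u v : `|F k.+1 u v - F k u v| <= (wp + wm) ^+ k.
Proof.
elim: k u v => [|k IH] u v.
  have /andP[? ?] := Fbj_bnd 1 u v; have /andP[? ?] := Fbj_bnd 0 u v.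
  by rewrite expr0 ler_norml; apply/andP; split; lra.
rewrite exprS Fbj_succ [F k.+1]Fbj_succ; apply: step_lip => //.
by rewrite exprn_ge0 // addr_ge0 // ltW.
Qed.

Definition FSim (u : V1) (v : V2) : R := limn (fun k => F k u v).

Lemma FSim_cvg u v : ((fun k => F k u v) @ \oo --> FSim u v)%classic /\
  forall k, `|F k u v - FSim u v| <= (1 - (wp + wm))^-1 * (wp + wm) ^+ k.
Proof.
have w0 : 0 <= wp + wm by rewrite addr_ge0 // ltW.
have [l [Fl Fl_bnd]] :=
  geometric_cauchy_cvg w0 w_lt1 (fun k => Fbj_dist_succ k u v).
by have -> : FSim u v = l by apply: cvg_lim.
Qed.

Lemma FSim_bnd u v : 0 <= FSim u v <= 1.
Proof.
have Fc : cvgn (fun k => F k u v) by apply: cvgP (FSim_cvg u v).1.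
apply/andP; split; [apply: limr_ge | apply: limr_le] => //;
  by apply: nearW => k; have /andP[] := Fbj_bnd k u v.
Qed.

(* FSim is a fixpoint of step: step (F k) = F (k+1) is close both to
   step FSim (by contraction) and to FSim. *)
Lemma FSim_fixpoint u v : step FSim u v = FSim u v.
Proof.
have w0 : 0 <= wp + wm by rewrite addr_ge0 // ltW.
apply/eqP; rewrite -subr_eq0 -normr_le0.
apply: (@geometric_bound_le0 _ _ (2 * (1 - (wp + wm))^-1) (wp + wm)) => // k.
set e := (1 - (wp + wm))^-1 * (wp + wm) ^+ k.
have e0 : 0 <= e by rewrite mulr_ge0 ?exprn_ge0 // invr_ge0 subr_ge0 ltW.
have d1 : `|F k.+1 u v - step FSim u v| <= (wp + wm) * e.
  by rewrite Fbj_succ; apply: step_lip => // x y; apply: (FSim_cvg x y).2.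
have d2 := (FSim_cvg u v).2 k.+1; rewrite exprS mulrCA -/e in d2.
have ce : (wp + wm) * e <= e by rewrite ler_piMl // ltW.
have := ler_distD (F k.+1 u v) (step FSim u v) (FSim u v).
rewrite distrC in d1; rewrite -mulrA -/e; lra.
Qed.

Variables (Lab : Type) (l1 : V1 -> Lab) (l2 : V2 -> Lab).
Hypothesis Lf1 : forall u v, Lf u v = 1 <-> l1 u = l2 v.

Lemma fixpoint_simulation (G : V1 -> V2 -> R) :
  (forall x y, 0 <= G x y <= 1) -> (forall x y, step G x y = G x y) ->
  bij_simulation E1 E2 l1 l2 (fun x y => G x y = 1).
Proof.
move=> G01 Gfix x y Gxy.
have G1 x' y' : G x' y' <= 1 by case/andP: (G01 x' y').
have /andP[_ out1] := Asim_bnd (Nout E1 x) (Nout E2 y) G01.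
have /andP[_ in1] := Asim_bnd (Nin E1 x) (Nin E2 y) G01.
have /andP[_ L1] := Lf01 x y.
have [Aout Ain Lxy] :=
  mean3_eq1 wp_gt0 wm_gt0 w_lt1 out1 in1 L1 (etrans (Gfix x y) Gxy).
by split; [exact/Lf1 | split; apply: (Asim_eq1_bij y)].
Qed.

Lemma simulation_Fbj_eq1 (Rel : V1 -> V2 -> Prop) :
  bij_simulation E1 E2 l1 l2 Rel -> forall k u v, Rel u v -> F k u v = 1.
Proof.
move=> sim; elim=> [|k IH] u v
  /sim[l12 [[f [f_inj [f_img f_rel]]] [g [g_inj [g_img g_rel]]]]].
  exact/Lf1.
have F1 x y : F k x y <= 1 by case/andP: (Fbj_bnd k x y).
have Aout : Asim (F k) (Nout E1 u) (Nout E2 v) = 1.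
  by apply: (Asim_eq1 F1 f_inj f_img) => x Sx; apply/IH/f_rel.
have Ain : Asim (F k) (Nin E1 u) (Nin E2 v) = 1.
  by apply: (Asim_eq1 F1 g_inj g_img) => x Sx; apply/IH/g_rel.
by rewrite Fbj_succ /step Aout Ain (proj2 (Lf1 u v) l12); ring.
Qed.

End Iteration.

Lemma Fbj_swap (R : realType) (V1 V2 : finType) (E1 : rel V1) (E2 : rel V2)
  (Lf : V1 -> V2 -> R) (Lf' : V2 -> V1 -> R) (wp wm : R) :
  (forall u v, Lf u v = Lf' v u) ->
  forall k u v, Fbj E2 E1 Lf' wp wm k v u = Fbj E1 E2 Lf wp wm k u v.
Proof.
move=> LL'; elim=> [|k IH] u v /=; first by rewrite LL'.
have IH' x y : Fbj E1 E2 Lf wp wm k x y = Fbj E2 E1 Lf' wp wm k y x.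
  by rewrite IH.
by rewrite !(Asim_swap _ _ IH') LL'.
Qed.

Unset Implicit Arguments.

Theorem theorem3 (R : realType) (V1 V2 : finType) (Lab : Type)
  (E1 : rel V1) (E2 : rel V2) (l1 : V1 -> Lab) (l2 : V2 -> Lab)
  (Lf : V1 -> V2 -> R)
  (HL01 : forall u v, 0 <= Lf u v <= 1)
  (HL1 : forall u v, Lf u v = 1 <-> l1 u = l2 v)
  (wp wm : R) (Hwp : 0 < wp) (Hwm : 0 < wm) (Hw : wp + wm < 1) :
  (forall (u : V1) (v : V2),
     cvgn (fun k => Fbj E1 E2 Lf wp wm k u v) /\
     0 <= limn (fun k => Fbj E1 E2 Lf wp wm k u v) <= 1 /\
     (limn (fun k => Fbj E1 E2 Lf wp wm k u v) = 1 <->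
        exists Rel : V1 -> V2 -> Prop,
          bij_simulation E1 E2 l1 l2 Rel /\ Rel u v)) /\
  (forall Lf' : V2 -> V1 -> R, (forall u v, Lf u v = Lf' v u) ->
     forall (u : V1) (v : V2),
       limn (fun k => Fbj E1 E2 Lf wp wm k u v) =
       limn (fun k => Fbj E2 E1 Lf' wp wm k v u)).
Proof.
split => [u v | Lf' LL' u v]; last first.
  by congr (limn _); apply: funext => k; rewrite (Fbj_swap E1 E2 wp wm LL').
have [F_cvg _] := FSim_cvg E1 E2 Hwp Hwm Hw HL01 u v.
split; first exact: cvgP F_cvg.
split; first exact: FSim_bnd.
split => [FSim1 | [Rel [sim Ruv]]].
- exists (fun x y => FSim E1 E2 Lf wp wm x y = 1); split => //.
  apply: (fixpoint_simulation Hwp Hwm Hw HL01 HL1).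
    exact: FSim_bnd.
  exact: FSim_fixpoint.
- have -> : (fun k => Fbj E1 E2 Lf wp wm k u v) = fun=> 1.
    by apply: funext => k; apply: (simulation_Fbj_eq1 Hwp Hwm Hw HL01 HL1 sim).
  exact: lim_cst.
Qed.
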